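(* Let $\mathcal X,\mathcal W$ be measurable spaces, $\mathcal Z=\mathcal X\times\mathcal W$, and let $(X,W,Y)$ have a joint distribution on $\mathcal X\times\mathcal W\times\mathbb R$ with $\mathbb E[Y^2]<\infty$; write $Z=(X,W)$. Let $n,m\ge 1$ be integers, $N=n+m$, and $\lambda\ge 0$. Let $\mathcal F\subset L^2(P_X)$ and $\mathcal G\subset L^2(P_Z)$ be nonempty closed convex sets, where each $f:\mathcal X\to\mathbb R$ is identified with its lift $(x,w)\mapsto f(x)$ on $\mathcal Z$. Define the population loss $$\mathcal{L}(f,g;\lambda)=\frac{n}{N}\mathbb{E}[(Y-f(X))^2]+\frac{m}{N}\mathbb{E}[(g(Z)-f(X))^2]+\lambda\frac{n}{N}\mathbb{E}[(Y-g(Z))^2],$$ and let $\mu(x)=\mathbb E[Y\mid X=x]$ and $\eta(z)=\mathbb E[Y\mid Z=z]$. Then any $(f^\star,g^\star)\in\mathcal F\times\mathcal G$ minimizing $\mathcal L(\cdot,\cdot;\lambda)$ over $\mathcal F\times\mathcal G$ satisfies $$f^\star=\Pi_{\mathcal{F}}\left(\frac{n}{N} \mu+\frac{m}{N}\mathbb{E}[g^\star(Z)\mid X=\cdot\,]\right),\qquad g^\star=\Pi_{\mathcal{G}}\left(\frac{m}{m+n\lambda} f^\star+\frac{n\lambda}{m+n\lambda}\eta\right).$$ Furthermore, if $\mu\in\mathcal F$, $\mu\in\mathcal G$ (via its lift) and $\eta\in\mathcal G$, then $$f^\star=\mu\quad\text{and}\quad g^\star=\frac{m}{m+n\lambda}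\mu+\frac{n\lambda}{m+n\lambda}\eta.$$
   Context: $\Pi_{\mathcal F}$ denotes the metric projection onto $\mathcal F$ in $L^2(P_X)$ (i.e. $\Pi_{\mathcal F}h\in\arg\min_{c\in\mathcal F}\mathbb E[(h(X)-c(X))^2]$), and $\Pi_{\mathcal G}$ the metric projection onto $\mathcal G$ in $L^2(P_Z)$. Here $P_X$, $P_Z$ are the marginal laws of $X$ and $Z$. *)

From HB Require Import structures.
From mathcomp Require Import all_boot all_order all_algebra.
From mathcomp Require Import all_classical all_reals all_analysis.
Set Implicit Arguments. Unset Strict Implicit. Unset Printing Implicit Defensive.
Import Order.TTheory GRing.Theory Num.Theory.
Local Open Scope classical_set_scope.
Local Open Scope ring_scope.

Section Defs.
Context {R : realType} {dO : measure_display} {Omega : measurableType dO}.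
Variable P : probability Omega R.

Definition expect (V : Omega -> R) : \bar R := (\int[P]_w (V w)%:E)%E.

Definition inL2 {d} {T : measurableType d} (Xr : Omega -> T) (h : T -> R) : Prop :=
  measurable_fun setT h /\ (expect (fun w => (h (Xr w) ^+ 2)%R) < +oo)%E.

Definition dist2 {d} {T : measurableType d} (Xr : Omega -> T) (h c : T -> R) : \bar R :=
  expect (fun w => ((h (Xr w) - c (Xr w)) ^+ 2)%R).

Definition is_proj {d} {T : measurableType d} (Xr : Omega -> T) (C : set (T -> R))
  (h c : T -> R) : Prop :=
  C c /\ forall c', C c' -> (dist2 Xr h c <= dist2 Xr h c')%E.

Definition is_cond_exp {d} {T : measurableType d} (Xr : Omega -> T) (V : Omega -> R)
  (h : T -> R) : Prop :=
  [/\ measurable_fun setT h,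
      P.-integrable setT (fun w => (h (Xr w))%:E) &
      forall A : set T, measurable A ->
        (\int[P]_(w in Xr @^-1` A) (V w)%:E = \int[P]_(w in Xr @^-1` A) (h (Xr w))%:E)%E].

Definition subL2 {d} {T : measurableType d} (Xr : Omega -> T) (C : set (T -> R)) : Prop :=
  forall c, C c -> inL2 Xr c.

Definition L2closed {d} {T : measurableType d} (Xr : Omega -> T) (C : set (T -> R)) : Prop :=
  forall (u : nat -> T -> R) (f : T -> R),
    (forall k, C (u k)) -> inL2 Xr f ->
    (fun k => dist2 Xr (u k) f) @ \oo --> (0 : \bar R)%E -> C f.

Definition fconvex {T : Type} (C : set (T -> R)) : Prop :=
  forall f g (t : R), C f -> C g -> 0 <= t -> t <= 1 ->
    C (fun x => t * f x + (1 - t) * g x).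

End Defs.

(* Completing the square shows that, for fixed g, the loss as a function of f
   is E[(V - f(X))^2] up to an additive constant, where
   V = (n/N) Y + (m/N) g(Z).  Since V - E[V | X] is orthogonal to every square
   integrable function of X, Pythagoras turns this into E[(E[V | X] - f(X))^2]
   up to a constant, and E[V | X] = (n/N) mu + (m/N) E[g(Z) | X]: minimizing in
   f is projecting onto F.  The same argument in g, conditioning on Z, gives the
   second identity.  When mu and eta are admissible, the tower property
   E[eta(Z) | X] = mu and the same decompositions write the loss as its value at
   (mu, a mu + b eta) plus a positive combination of |f - mu|^2 and
   |g - (a f + b eta)|^2, which must both vanish at a minimizer. *)

From HB Require Import structures.
From mathcomp Require Import all_boot all_order all_algebra.
From mathcomp Require Import all_classical all_reals all_analysis.
From mathcomp Require Import measurable_realfun ring lra.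
Import HBNNSimple.
Set Implicit Arguments. Unset Strict Implicit. Unset Printing Implicit Defensive.
Import Order.TTheory GRing.Theory Num.Theory.
Local Open Scope classical_set_scope.
Local Open Scope ring_scope.

Section funrposneg_mul.
Context {R : realDomainType}.

Lemma funrposM {T : Type} (f g : T -> R) :
  (f \* g)^\+ = f^\+ \* g^\+ \+ f^\- \* g^\-.
Proof.
apply/funext => x; rewrite /funrpos /funrneg /= !maxEle.
by do 5 case: ifPn => /= ?; nra.
Qed.

Lemma funrnegM {T : Type} (f g : T -> R) :
  (f \* g)^\- = f^\+ \* g^\- \+ f^\- \* g^\+.
Proof.
apply/funext => x; rewrite /funrpos /funrneg /= !maxEle.
by do 5 case: ifPn => /= ?; nra.
Qed.

End funrposneg_mul.

Section sigma_orthogonality.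
Context {R : realType} {dO : measure_display} {Omega : measurableType dO}.
Variable P : probability Omega R.
Local Open Scope ereal_scope.

Lemma integral_nnsfun_comp_mul {d} {T : measurableType d} (Xr : Omega -> T)
    (mXr : measurable_fun setT Xr) (D : Omega -> R) (mD : measurable_fun setT D)
    (D0 : forall w, (0 <= D w)%R) (s : {nnsfun T >-> R}) :
  \int[P]_w ((s (Xr w))%:E * (D w)%:E) =
  \sum_(y \in range s) y%:E * \int[P]_(w in Xr @^-1` (s @^-1` [set y])) (D w)%:E.
Proof.
transitivity (\int[P]_w (\sum_(y \in range s)
    (y * \1_(s @^-1` [set y]) (Xr w))%:E * (D w)%:E)).
  apply: eq_integral => w _.
  rewrite -ge0_mule_fsuml => [|y]; last exact: nnfun_muleindic_ge0.
  by rewrite fsumEFin // -(fimfunE _ (Xr w)).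
rewrite ge0_integral_fsum//; last 2 first.
- move=> y; apply: emeasurable_funM; last exact/measurable_EFinP.
  apply/measurable_EFinP; apply: measurable_funM => //.
  exact: measurableT_comp.
- by move=> y w _; rewrite mule_ge0 ?nnfun_muleindic_ge0 ?lee_fin.
apply: eq_fsbigr => y yr.
under eq_integral do rewrite EFinM -muleA.
rewrite ge0_integralZl//.
- congr (_ * _); rewrite [RHS]integral_mkcond; apply: eq_integral => w _.
  by rewrite epatch_indic /= muleC.
- apply: emeasurable_funM; apply/measurable_EFinP => //.
  exact: measurableT_comp.
- by move=> w _; rewrite mule_ge0 ?lee_fin.
- by move: yr; rewrite inE => -[t _ <-]; rewrite lee_fin.
Qed.

Lemma ge0_integral_comp_mul_eq {d} {T : measurableType d} (Xr : Omega -> T)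
    (mXr : measurable_fun setT Xr) (D1 D2 : Omega -> R)
    (mD1 : measurable_fun setT D1) (mD2 : measurable_fun setT D2)
    (D10 : forall w, (0 <= D1 w)%R) (D20 : forall w, (0 <= D2 w)%R) :
  (forall A, measurable A ->
     \int[P]_(w in Xr @^-1` A) (D1 w)%:E = \int[P]_(w in Xr @^-1` A) (D2 w)%:E) ->
  forall phi : T -> R, measurable_fun setT phi -> (forall x, (0 <= phi x)%R) ->
  \int[P]_w ((phi (Xr w))%:E * (D1 w)%:E) = \int[P]_w ((phi (Xr w))%:E * (D2 w)%:E).
Proof.
move=> D12 phi mphi phi0.
have mEphi : measurable_fun setT (EFin \o phi) by exact/measurable_EFinP.
pose s := nnsfun_approx measurableT mEphi.
have integral_lim (D : Omega -> R) : measurable_fun setT D -> (forall w, (0 <= D w)%R) ->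
    \int[P]_w ((phi (Xr w))%:E * (D w)%:E) =
    limn (fun k => \int[P]_w ((s k (Xr w))%:E * (D w)%:E)).
  move=> mD D0; rewrite -monotone_convergence//.
  - apply: eq_integral => w _; apply/esym/cvg_lim => //; apply: cvgeZr => //.
    by apply: (cvg_nnsfun_approx measurableT mEphi) => // x _; rewrite lee_fin.
  - move=> k; apply: emeasurable_funM; apply/measurable_EFinP => //.
    exact: measurableT_comp.
  - by move=> k w _; rewrite mule_ge0 ?lee_fin.
  - move=> w _ i j ij; rewrite lee_wpmul2r ?lee_fin//.
    exact/lefP/nd_nnsfun_approx.
rewrite (integral_lim D1)// (integral_lim D2)//; congr (limn _); apply/funext => k.
by rewrite !integral_nnsfun_comp_mul//; apply: eq_fsbigr => y _; rewrite D12.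
Qed.

Lemma integral_comp_mul_eq0 {d} {T : measurableType d} (Xr : Omega -> T)
    (mXr : measurable_fun setT Xr) (D : Omega -> R) (mD : measurable_fun setT D) :
  P.-integrable setT (EFin \o D) ->
  (forall A, measurable A -> \int[P]_(w in Xr @^-1` A) (D w)%:E = 0) ->
  forall phi : T -> R, measurable_fun setT phi ->
  P.-integrable setT (fun w => (phi (Xr w) * D w)%:E) ->
  \int[P]_w (phi (Xr w) * D w)%:E = 0.
Proof.
move=> iD D0 phi mphi iphiD.
(* D^+ and D^- have equal integrals over every Xr-preimage, hence against every
   nonnegative phi(Xr); both sign parts of phi(Xr) D are sums of such products. *)
have Dpos_neg A : measurable A ->
    \int[P]_(w in Xr @^-1` A) (D^\+ w)%:E = \int[P]_(w in Xr @^-1` A) (D^\- w)%:E.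
  move=> mA; have mXA : measurable (Xr @^-1` A) by rewrite -[_ @^-1` _]setTI; exact: mXr.
  have iDA : P.-integrable (Xr @^-1` A) (EFin \o D) by exact: integrableS iD.
  have := D0 A mA; rewrite integralE funerpos funerneg => DA0.
  have := integrable_neg_fin_num mXA iDA; rewrite funerneg => Dneg_fin.
  by rewrite -[LHS](subeK _ Dneg_fin) DA0 add0e.
have transfer (psi : T -> R) : measurable_fun setT psi -> (forall x, (0 <= psi x)%R) ->
    \int[P]_w ((psi (Xr w))%:E * (D^\+ w)%:E) = \int[P]_w ((psi (Xr w))%:E * (D^\- w)%:E).
  move=> mpsi psi0; apply: ge0_integral_comp_mul_eq => //.
  - exact: measurable_funrpos.
  - exact: measurable_funrneg.
have mprod (psi : T -> R) (E : Omega -> R) : measurable_fun setT psi ->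
    measurable_fun setT E -> measurable_fun setT (fun w => (psi (Xr w))%:E * (E w)%:E).
  move=> mpsi mE; apply: emeasurable_funM; apply/measurable_EFinP => //.
  exact: measurableT_comp.
have mpp := measurable_funrpos mphi; have mpn := measurable_funrneg mphi.
have mDp := measurable_funrpos mD; have mDn := measurable_funrneg mD.
rewrite integralE.
have -> : (fun w => (phi (Xr w) * D w)%:E)^\+ = fun w =>
    (phi^\+ (Xr w))%:E * (D^\+ w)%:E + (phi^\- (Xr w))%:E * (D^\- w)%:E.
  apply/funext => w; rewrite funeposE -EFin_max.
  by rewrite (_ : Num.max _ 0 = ((phi \o Xr) \* D)^\+ w)%R// funrposM.
have En : (fun w => (phi (Xr w) * D w)%:E)^\- = fun w =>
    (phi^\+ (Xr w))%:E * (D^\- w)%:E + (phi^\- (Xr w))%:E * (D^\+ w)%:E.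
  apply/funext => w; rewrite funenegE -EFinN -EFin_max.
  by rewrite (_ : Num.max _ 0 = ((phi \o Xr) \* D)^\- w)%R// funrnegM.
have neg_fin := integrable_neg_fin_num measurableT iphiD.
rewrite ge0_integralD//; try by [exact: mprod | move=> w _; rewrite mule_ge0 ?lee_fin].
rewrite (transfer _ mpp)// -(transfer _ mpn)//.
rewrite -ge0_integralD//; try by [exact: mprod | move=> w _; rewrite mule_ge0 ?lee_fin].
by rewrite -En subee.
Qed.

End sigma_orthogonality.

Section square_integrable.
Context {R : realType} {dO : measure_display} {Omega : measurableType dO}.
Variable P : probability Omega R.

Definition L2 (U : Omega -> R) := U \in Lfun P 2%:E.

Lemma L2P (U : Omega -> R) : measurable_fun setT U ->
  L2 U <-> (\int[P]_w (U w ^+ 2)%:E < +oo)%E.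
Proof.
move=> mU; have N2 : ('N[P]_2%:E[EFin \o U] `^ 2 = \int[P]_w (U w ^+ 2)%:E)%E.
  rewrite poweR_Lnorm//; apply: eq_integral => w _ /=.
  by rewrite powR_mulrn// -normrX ger0_norm// sqr_ge0.
have mfunU : U \in mfun by rewrite inE.
rewrite /L2 inE /= mfunU inE /= /finite_norm -N2; split.
- exact: poweR_lty.
- exact: lty_poweRy.
Qed.

Lemma L2_measurable U : L2 U -> measurable_fun setT U.
Proof. by rewrite /L2 inE => /andP[]; rewrite inE. Qed.

Lemma L2D U V : L2 U -> L2 V -> L2 (fun w => U w + V w).
Proof. by move=> LU LV; have := rpredD LU LV => /(_ (lee1n 2)). Qed.

Lemma L2Z k U : L2 U -> L2 (fun w => k * U w).
Proof. by move=> LU; have := rpredZ k LU => /(_ (lee1n 2)). Qed.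

Lemma L2B U V : L2 U -> L2 V -> L2 (fun w => U w - V w).
Proof. by move=> LU LV; have := rpredB LU LV => /(_ (lee1n 2)). Qed.

Lemma integrableD_EFin (f g : Omega -> R) :
  P.-integrable setT (EFin \o f) -> P.-integrable setT (EFin \o g) ->
  P.-integrable setT (EFin \o (fun w => f w + g w)).
Proof. by move=> fi gi; apply: eq_integrable (integrableD measurableT fi gi). Qed.

Lemma integrableZl_EFin (k : R) (f : Omega -> R) :
  P.-integrable setT (EFin \o f) -> P.-integrable setT (EFin \o (fun w => k * f w)).
Proof. by move=> /(integrableZl measurableT k); apply: eq_integrable. Qed.

Lemma L2_integrable U : L2 U -> P.-integrable setT (EFin \o U).
Proof.
by move=> LU; apply/Lfun1_integrable/Lfun_subset12 => //; exact: fin_num_measure.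
Qed.

Lemma L2_integrable_mul U V : L2 U -> L2 V ->
  P.-integrable setT (EFin \o (fun w => U w * V w)).
Proof. by move=> LU LV; apply/Lfun1_integrable; exact: Lfun2_mul_Lfun1. Qed.

Lemma inL2_comp {d} {T : measurableType d} (Xr : Omega -> T) (h : T -> R) :
  measurable_fun setT Xr -> inL2 P Xr h -> L2 (fun w => h (Xr w)).
Proof. by move=> mXr [mh h2]; apply/L2P => //; exact: measurableT_comp. Qed.

Lemma expect_sqr U : L2 U -> expect P (fun w => U w ^+ 2) = (\int[P]_w U w ^+ 2)%:E.
Proof.
by move=> LU; rewrite fineK// integrable_fin_num//; exact: Lfun2_integrable_sqr.
Qed.

Lemma Rintegral_sqr_eq0 U : L2 U -> \int[P]_w U w ^+ 2 = 0 -> {ae P, forall w, U w = 0}.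
Proof.
move=> LU U20.
have mU2 : measurable_fun setT (fun w => (U w ^+ 2)%:E).
  by apply/measurable_EFinP; exact/measurable_funX/L2_measurable.
have : (\int[P]_w `|(U w ^+ 2)%:E| = 0)%E.
  rewrite -[RHS]/(0%:E) -U20 -expect_sqr //; apply: eq_integral => w _.
  by rewrite gee0_abs// lee_fin sqr_ge0.
move/(ae_eq_integral_abs P measurableT mU2); apply: filterS => w /(_ I) /= /eqP.
by rewrite eqe sqrf_eq0 => /eqP.
Qed.

Lemma cond_exp_pythagoras {d} {T : measurableType d} (Xr : Omega -> T)
    (mXr : measurable_fun setT Xr) (V : Omega -> R) (h phi : T -> R) :
  L2 V -> is_cond_exp P Xr V h -> L2 (fun w => h (Xr w)) ->
  measurable_fun setT phi -> L2 (fun w => phi (Xr w)) ->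
  \int[P]_w (V w - phi (Xr w)) ^+ 2 =
  \int[P]_w (V w - h (Xr w)) ^+ 2 + \int[P]_w (h (Xr w) - phi (Xr w)) ^+ 2.
Proof.
move=> LV [mh _ Vh] Lh mphi Lphi.
pose D w := V w - h (Xr w); pose E w := h (Xr w) - phi (Xr w).
have LD : L2 D by exact: L2B.
have LE : L2 E by exact: L2B.
have D0 A : measurable A -> (\int[P]_(w in Xr @^-1` A) (D w)%:E = 0)%E.
  move=> mA; have mXA : measurable (Xr @^-1` A) by rewrite -[_ @^-1` _]setTI; exact: mXr.
  under eq_integral do rewrite EFinB.
  rewrite integralB_EFin//; last 2 first.
  - exact/integrableS/L2_integrable.
  - exact/integrableS/L2_integrable.
  by rewrite Vh// subee// integrable_fin_num//; exact/integrableS/L2_integrable.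
have orth : \int[P]_w (E w * D w) = 0.
  rewrite /Rintegral (integral_comp_mul_eq0 mXr _ _ D0 (phi := fun x => h x - phi x)) //.
  - exact: L2_measurable.
  - exact: L2_integrable.
  - exact: measurable_funB.
  - exact: L2_integrable_mul.
transitivity (\int[P]_w (D w ^+ 2 + E w ^+ 2 + 2 * (E w * D w))).
  by apply: eq_Rintegral => w _; rewrite /D /E; ring.
rewrite RintegralD//; last 2 first.
- by apply: integrableD_EFin; exact: Lfun2_integrable_sqr.
- by apply: integrableZl_EFin; exact: L2_integrable_mul.
rewrite RintegralZl ?orth ?mulr0 ?addr0 ?RintegralD//; last exact: L2_integrable_mul.
all: exact: Lfun2_integrable_sqr.
Qed.

Lemma Rintegral_complete_square (a b : R) (A B U : Omega -> R) :
  a + b = 1 -> L2 A -> L2 B -> L2 U ->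
  a * \int[P]_w (A w - U w) ^+ 2 + b * \int[P]_w (B w - U w) ^+ 2 =
  \int[P]_w (a * A w + b * B w - U w) ^+ 2 + a * b * \int[P]_w (A w - B w) ^+ 2.
Proof.
move=> ab1 LA LB LU.
have sqr_int F G : L2 F -> L2 G -> P.-integrable setT (EFin \o (fun w => (F w - G w) ^+ 2)).
  by move=> LF LG; exact/Lfun2_integrable_sqr/L2B.
have LC : L2 (fun w => a * A w + b * B w) by apply: L2D; exact: L2Z.
rewrite -!RintegralZl ?sqr_int// -!RintegralD ?integrableZl_EFin ?sqr_int//.
by apply: eq_Rintegral => w _; rewrite (_ : b = 1 - a); [ring|lra].
Qed.

Lemma Rintegral_sqr_subC (U V : Omega -> R) :
  \int[P]_w (U w - V w) ^+ 2 = \int[P]_w (V w - U w) ^+ 2.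
Proof. by apply: eq_Rintegral => w _; rewrite -sqrrN opprB. Qed.

Lemma is_cond_exp_comp {d} {T : measurableType d} (Xr : Omega -> T) (phi : T -> R) :
  measurable_fun setT phi -> P.-integrable setT (EFin \o (fun w => phi (Xr w))) ->
  is_cond_exp P Xr (fun w => phi (Xr w)) phi.
Proof. by split. Qed.

Lemma is_cond_exp_lin {d} {T : measurableType d} (Xr : Omega -> T)
    (mXr : measurable_fun setT Xr) (a b : R) (V1 V2 : Omega -> R) (h1 h2 : T -> R) :
  P.-integrable setT (EFin \o V1) -> P.-integrable setT (EFin \o V2) ->
  is_cond_exp P Xr V1 h1 -> is_cond_exp P Xr V2 h2 ->
  is_cond_exp P Xr (fun w => a * V1 w + b * V2 w) (fun x => a * h1 x + b * h2 x).
Proof.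
move=> iV1 iV2 [mh1 ih1 Vh1] [mh2 ih2 Vh2].
have lin_on S f g : measurable S -> P.-integrable setT (EFin \o f) ->
    P.-integrable setT (EFin \o g) ->
    (\int[P]_(w in S) (a * f w + b * g w)%:E =
     a%:E * \int[P]_(w in S) (f w)%:E + b%:E * \int[P]_(w in S) (g w)%:E)%E.
  move=> mS fi gi; under eq_integral do rewrite EFinD !EFinM.
  rewrite integralD//; [|exact/integrableZl/integrableS/fi|exact/integrableZl/integrableS/gi].
  by rewrite !integralZl//; [exact/integrableS/gi|exact/integrableS/fi].
split.
- by apply: measurable_funD; exact: measurable_funM.
- by apply: integrableD_EFin; exact: integrableZl_EFin.
- move=> A mA; have mXA : measurable (Xr @^-1` A) by rewrite -[_ @^-1` _]setTI; exact: mXr.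
  by rewrite !lin_on// Vh1// Vh2.
Qed.

Lemma is_cond_exp_tower {d1 d2} {T1 : measurableType d1} {T2 : measurableType d2}
    (Zr : Omega -> T2) (pi : T2 -> T1) (V : Omega -> R) (eta : T2 -> R) (mu : T1 -> R) :
  measurable_fun setT pi -> is_cond_exp P Zr V eta ->
  is_cond_exp P (fun w => pi (Zr w)) V mu ->
  is_cond_exp P (fun w => pi (Zr w)) (fun w => eta (Zr w)) mu.
Proof.
move=> mpi [_ _ Veta] [mmu imu Vmu]; split => // A mA.
rewrite -Vmu// -[(fun w => pi (Zr w)) @^-1` A]/(Zr @^-1` (pi @^-1` A)) Veta//.
by rewrite -[_ @^-1` _]setTI; exact: mpi.
Qed.

Lemma is_proj_L2 {d} {T : measurableType d} (Xr : Omega -> T)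
    (mXr : measurable_fun setT Xr) (C : set (T -> R)) (h c : T -> R) :
  subL2 P Xr C -> C c -> measurable_fun setT h ->
  (L2 (fun w => h (Xr w)) -> forall c', C c' ->
    \int[P]_w (h (Xr w) - c (Xr w)) ^+ 2 <= \int[P]_w (h (Xr w) - c' (Xr w)) ^+ 2) ->
  is_proj P Xr C h c.
Proof.
move=> CL2 Cc mh hmin; split=> // c' Cc'.
have Lc := inL2_comp mXr (CL2 _ Cc); have Lc' := inL2_comp mXr (CL2 _ Cc').
have [Lh|NLh] := pselect (L2 (fun w => h (Xr w))).
  by rewrite /dist2 !expect_sqr ?L2B// lee_fin; exact: hmin.
(* Otherwise h(Xr) - c'(Xr) is not square integrable either. *)
suff -> : dist2 P Xr h c' = +oo%E by rewrite leey.
have mhc' : measurable_fun setT (fun w => h (Xr w) - c' (Xr w)).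
  by apply: measurable_funB; [exact: measurableT_comp|exact: L2_measurable].
apply/eqP; rewrite eq_le leey /= leNgt; apply/negP => /(L2P mhc') Lhc'; apply: NLh.
rewrite (_ : (fun w => h (Xr w)) = fun w => h (Xr w) - c' (Xr w) + c' (Xr w)).
  exact: L2D.
by apply/funext => w; rewrite subrK.
Qed.

End square_integrable.

Section population_loss.
Context {R : realType} {dO : measure_display} {Omega : measurableType dO}.
Variable P : probability Omega R.
Context {dX : measure_display} {TX : measurableType dX}.
Context {dW : measure_display} {TW : measurableType dW}.
Variables (X : Omega -> TX) (W : Omega -> TW) (Y : Omega -> R).
Hypotheses (mX : measurable_fun setT X) (mW : measurable_fun setT W) (LY : L2 P Y).
Variables (n m : nat) (lambda : R).
Hypotheses (n_gt0 : (0 < n)%N) (m_gt0 : (0 < m)%N) (lambda_ge0 : 0 <= lambda).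
Variables (mu : TX -> R) (eta : TX * TW -> R).
Local Notation Z := (fun w => (X w, W w)).
Hypotheses (hmu : is_cond_exp P X Y mu) (heta : is_cond_exp P Z Y eta).

Local Notation p := (n%:R / (n + m)%:R).
Local Notation q := (m%:R / (n + m)%:R).
Local Notation a := (m%:R / (m%:R + n%:R * lambda)).
Local Notation b := (n%:R * lambda / (m%:R + n%:R * lambda)).
Local Notation k := ((m%:R + n%:R * lambda) / (n + m)%:R).

Definition pop_loss (f : TX -> R) (g : TX * TW -> R) : \bar R :=
  (p%:E * expect P (fun w => ((Y w - f (X w)) ^+ 2)%R)
   + q%:E * expect P (fun w => ((g (Z w) - f (X w)) ^+ 2)%R)
   + (lambda * p)%:E * expect P (fun w => ((Y w - g (Z w)) ^+ 2)%R))%E.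

Let mZ : measurable_fun setT Z. Proof. exact: measurable_fun_pair. Qed.

Let s_gt0 : 0 < m%:R + n%:R * lambda :> R.
Proof. by rewrite ltr_pwDl ?mulr_ge0// ltr0n. Qed.

Let N_gt0 : 0 < (n + m)%:R :> R. Proof. by rewrite ltr0n addn_gt0 n_gt0. Qed.

Let p_gt0 : 0 < p :> R. Proof. by rewrite divr_gt0// ltr0n. Qed.

Let k_gt0 : 0 < k :> R. Proof. exact: divr_gt0. Qed.

Let pq1 : p + q = 1 :> R.
Proof. by rewrite -mulrDl -natrD mulfV// gt_eqF. Qed.

Let ab1 : a + b = 1 :> R.
Proof. by rewrite -mulrDl mulfV// gt_eqF. Qed.

Let a_ge0 : 0 <= a :> R. Proof. by rewrite divr_ge0// ltW. Qed.

Let b_ge0 : 0 <= b :> R. Proof. by rewrite divr_ge0 ?mulr_ge0// ltW. Qed.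

Let bE : b = 1 - a :> R.
Proof. by have := ab1; lra. Qed.

Let qE : q = k * a :> R.
Proof. by field; rewrite -natrD !gt_eqF. Qed.

Let lpE : lambda * p = k * b.
Proof. by field; rewrite -natrD !gt_eqF. Qed.

Lemma pop_lossE f g : L2 P (fun w => f (X w)) -> L2 P (fun w => g (Z w)) ->
  pop_loss f g = (p * \int[P]_w (Y w - f (X w)) ^+ 2
                  + q * \int[P]_w (g (Z w) - f (X w)) ^+ 2
                  + lambda * p * \int[P]_w (Y w - g (Z w)) ^+ 2)%:E.
Proof. by move=> Lf Lg; rewrite /pop_loss !expect_sqr ?L2B// -!EFinM -!EFinD. Qed.

Lemma pop_loss_decomp_fst (g : TX * TW -> R) (c : TX -> R) :
  L2 P (fun w => g (Z w)) -> is_cond_exp P X (fun w => g (Z w)) c ->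
  L2 P (fun w => p * mu (X w) + q * c (X w)) ->
  exists K, forall f, measurable_fun setT f -> L2 P (fun w => f (X w)) ->
    pop_loss f g = (\int[P]_w (p * mu (X w) + q * c (X w) - f (X w)) ^+ 2 + K)%:E.
Proof.
move=> Lg hc Lh.
have LV : L2 P (fun w => p * Y w + q * g (Z w)) by apply: L2D; exact: L2Z.
have hV : is_cond_exp P X (fun w => p * Y w + q * g (Z w)) (fun x => p * mu x + q * c x).
  by apply: is_cond_exp_lin => //; exact: L2_integrable.
exists (\int[P]_w (p * Y w + q * g (Z w) - (p * mu (X w) + q * c (X w))) ^+ 2
        + (p * q + lambda * p) * \int[P]_w (Y w - g (Z w)) ^+ 2).
move=> f mf Lf; rewrite pop_lossE// (Rintegral_complete_square pq1 LY Lg Lf).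
rewrite (cond_exp_pythagoras mX LV hV Lh mf Lf); congr (_%:E); lra.
Qed.

Lemma pop_loss_decomp_snd (f : TX -> R) :
  measurable_fun setT f -> L2 P (fun w => f (X w)) ->
  L2 P (fun w => a * f (X w) + b * eta (Z w)) ->
  exists K, forall g, measurable_fun setT g -> L2 P (fun w => g (Z w)) ->
    pop_loss f g = (k * \int[P]_w (a * f (X w) + b * eta (Z w) - g (Z w)) ^+ 2 + K)%:E.
Proof.
move=> mf Lf Lh.
have LV : L2 P (fun w => a * f (X w) + b * Y w) by apply: L2D; exact: L2Z.
have hV : is_cond_exp P Z (fun w => a * f (X w) + b * Y w) (fun z => a * f z.1 + b * eta z).
  apply: is_cond_exp_lin => //; [exact: L2_integrable|exact: L2_integrable|].
  apply: is_cond_exp_comp; [exact: measurableT_comp|exact: L2_integrable].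
exists (p * \int[P]_w (Y w - f (X w)) ^+ 2
        + k * \int[P]_w (a * f (X w) + b * Y w - (a * f (X w) + b * eta (Z w))) ^+ 2
        + k * (a * b) * \int[P]_w (f (X w) - Y w) ^+ 2).
move=> g mg Lg; rewrite pop_lossE// (Rintegral_sqr_subC P (fun w => g (Z w))) qE lpE.
have := Rintegral_complete_square ab1 Lf LY Lg.
rewrite (cond_exp_pythagoras mZ LV hV Lh mg Lg) => /(congr1 (fun x => k * x)) ?.
congr (_%:E); lra.
Qed.

Lemma pop_loss_decomp : L2 P (fun w => mu (X w)) -> L2 P (fun w => eta (Z w)) ->
  exists C, forall f g, measurable_fun setT f -> measurable_fun setT g ->
    L2 P (fun w => f (X w)) -> L2 P (fun w => g (Z w)) ->
    pop_loss f g = (C + (p + k * (a * b)) * \int[P]_w (mu (X w) - f (X w)) ^+ 2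
                + k * \int[P]_w (a * f (X w) + b * eta (Z w) - g (Z w)) ^+ 2)%:E.
Proof.
move=> Lmu Leta.
have heta_X : is_cond_exp P X (fun w => eta (Z w)) mu.
  exact: (is_cond_exp_tower (Zr := Z) measurable_fst heta hmu).
exists ((p + k * b) * \int[P]_w (Y w - eta (Z w)) ^+ 2
        + (p + k * (a * b)) * \int[P]_w (eta (Z w) - mu (X w)) ^+ 2).
move=> f g mf mg Lf Lg.
have mf1 : measurable_fun setT (fun z : TX * TW => f z.1) by exact: measurableT_comp.
have Y_f := cond_exp_pythagoras mZ LY heta Leta mf1 Lf.
have Y_g := cond_exp_pythagoras mZ LY heta Leta mg Lg.
have eta_f := cond_exp_pythagoras mX Leta heta_X Lmu mf Lf.
have := Rintegral_complete_square ab1 Lf Leta Lg.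
rewrite (Rintegral_sqr_subC P (fun w => f (X w)) (fun w => eta (Z w))) eta_f.
move=> /(congr1 (fun x => k * x)) ?.
rewrite pop_lossE// (Rintegral_sqr_subC P (fun w => g (Z w))) qE lpE Y_f Y_g eta_f.
congr (_%:E); lra.
Qed.

Lemma pop_loss_argmin_fst_is_proj (F : set (TX -> R)) (g : TX * TW -> R) (c : TX -> R)
    (fstar : TX -> R) :
  subL2 P X F -> F fstar -> L2 P (fun w => g (Z w)) ->
  is_cond_exp P X (fun w => g (Z w)) c ->
  (forall f, F f -> (pop_loss fstar g <= pop_loss f g)%E) ->
  is_proj P X F (fun x => p * mu x + q * c x) fstar.
Proof.
move=> FL2 Ffs Lg hc fstar_min; apply: (is_proj_L2 mX FL2 Ffs).
  by case: hmu hc => mmu _ _ [mc _ _]; apply: measurable_funD; exact: measurable_funM.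
move=> Lh f Ff; have [K HK] := pop_loss_decomp_fst Lg hc Lh.
have [mf _] := FL2 _ Ff; have [mfstar _] := FL2 _ Ffs.
have Lf := inL2_comp mX (FL2 _ Ff); have Lfstar := inL2_comp mX (FL2 _ Ffs).
by have := fstar_min f Ff; rewrite !HK// lee_fin lerD2r.
Qed.

Lemma pop_loss_argmin_snd_is_proj (G : set (TX * TW -> R)) (f : TX -> R)
    (gstar : TX * TW -> R) :
  subL2 P Z G -> G gstar -> measurable_fun setT f -> L2 P (fun w => f (X w)) ->
  (forall g, G g -> (pop_loss f gstar <= pop_loss f g)%E) ->
  is_proj P Z G (fun z => a * f z.1 + b * eta z) gstar.
Proof.
move=> GL2 Ggs mf Lf gstar_min; apply: (is_proj_L2 mZ GL2 Ggs).
  case: heta => meta _ _; apply: measurable_funD; apply: measurable_funM => //.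
  exact: measurableT_comp.
move=> Lh g Gg; have [K HK] := pop_loss_decomp_snd mf Lf Lh.
have [mg _] := GL2 _ Gg; have [mgstar _] := GL2 _ Ggs.
have Lg := inL2_comp mZ (GL2 _ Gg); have Lgstar := inL2_comp mZ (GL2 _ Ggs).
by have := gstar_min g Gg; rewrite !HK// lee_fin lerD2r ler_pM2l.
Qed.

Lemma pop_loss_argmin_eq (F : set (TX -> R)) (G : set (TX * TW -> R))
    (fstar : TX -> R) (gstar : TX * TW -> R) :
  subL2 P X F -> subL2 P Z G -> fconvex G -> F fstar -> G gstar ->
  (forall f g, F f -> G g -> (pop_loss fstar gstar <= pop_loss f g)%E) ->
  F mu -> G (fun z => mu z.1) -> G eta ->
  {ae P, forall w, fstar (X w) = mu (X w)} /\
  {ae P, forall w, gstar (Z w) = a * mu (X w) + b * eta (Z w)}.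
Proof.
move=> FL2 GL2 Gcvx Ffs Ggs fgstar_min Fmu Gmu Geta.
have [mmu _] := FL2 _ Fmu; have [mfstar _] := FL2 _ Ffs.
have [mgstar _] := GL2 _ Ggs.
have Lmu := inL2_comp mX (FL2 _ Fmu); have Leta := inL2_comp mZ (GL2 _ Geta).
have Lfstar := inL2_comp mX (FL2 _ Ffs); have Lgstar := inL2_comp mZ (GL2 _ Ggs).
pose g0 z := a * mu z.1 + b * eta z.
have Gg0 : G g0.
  by rewrite /g0 bE; apply: Gcvx => //; rewrite -subr_ge0 -bE.
have [mg0 _] := GL2 _ Gg0; have Lg0 := inL2_comp mZ (GL2 _ Gg0).
have [C HC] := pop_loss_decomp Lmu Leta.
have sqr_sub0 (U : Omega -> R) : \int[P]_w (U w - U w) ^+ 2 = 0.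
  under eq_Rintegral do rewrite subrr expr0n.
  by rewrite /Rintegral integral0.
have := fgstar_min mu g0 Fmu Gg0; rewrite !HC// !sqr_sub0 !mulr0 !addr0 lee_fin.
set E1 := \int[P]_w _; set E2 := \int[P]_w _ => E12.
have E1_ge0 : 0 <= E1 by apply: Rintegral_ge0 => w _; exact: sqr_ge0.
have E2_ge0 : 0 <= E2 by apply: Rintegral_ge0 => w _; exact: sqr_ge0.
have c1_gt0 : 0 < p + k * (a * b).
  by apply: ltr_wpDr => //; apply: mulr_ge0; [exact: ltW|exact: mulr_ge0].
have c1E1_ge0 := mulr_ge0 (ltW c1_gt0) E1_ge0.
have kE2_ge0 := mulr_ge0 (ltW k_gt0) E2_ge0.
have /(Rintegral_sqr_eq0 (L2B Lmu Lfstar)) fstar_mu : E1 = 0.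
  by apply/eqP; rewrite eq_le E1_ge0 andbT -(pmulr_rle0 _ c1_gt0); lra.
have /(Rintegral_sqr_eq0 (L2B (L2D (L2Z a Lfstar) (L2Z b Leta)) Lgstar)) gstar_g0 : E2 = 0.
  by apply/eqP; rewrite eq_le E2_ge0 andbT -(pmulr_rle0 _ k_gt0); lra.
split; first by apply: filterS fstar_mu => w /=; lra.
apply: filterS2 fstar_mu gstar_g0 => w /= e1 e2.
have e : fstar (X w) = mu (X w) by lra.
by rewrite e in e2; lra.
Qed.

End population_loss.

Theorem theorem2p1 (R : realType) (dO : measure_display) (Omega : measurableType dO)
  (P : probability Omega R)
  (dX : measure_display) (TX : measurableType dX)
  (dW : measure_display) (TW : measurableType dW)
  (X : Omega -> TX) (W : Omega -> TW) (Y : Omega -> R)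
  (mX : measurable_fun setT X) (mW : measurable_fun setT W) (mY : measurable_fun setT Y)
  (Y2 : (expect P (fun w => (Y w ^+ 2)%R) < +oo)%E)
  (n m : nat) (hn : (1 <= n)%N) (hm : (1 <= m)%N) (lambda : R) (hl : 0 <= lambda)
  (F : set (TX -> R)) (G : set (TX * TW -> R))
  (F0 : F !=set0) (FL2 : subL2 P X F) (Fcl : L2closed P X F) (Fcvx : fconvex F)
  (G0 : G !=set0)
  (GL2 : subL2 P (fun w => (X w, W w)) G)
  (Gcl : L2closed P (fun w => (X w, W w)) G) (Gcvx : fconvex G)
  (mu : TX -> R) (eta : TX * TW -> R)
  (hmu : is_cond_exp P X Y mu)
  (heta : is_cond_exp P (fun w => (X w, W w)) Y eta)
  (fstar : TX -> R) (gstar : TX * TW -> R)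
  (Ffs : F fstar) (Ggs : G gstar) :
  let N := (n + m)%N in
  let Z := fun w => (X w, W w) in
  let loss := fun (f : TX -> R) (g : TX * TW -> R) =>
    ((n%:R / N%:R)%:E * expect P (fun w => ((Y w - f (X w)) ^+ 2)%R)
     + (m%:R / N%:R)%:E * expect P (fun w => ((g (Z w) - f (X w)) ^+ 2)%R)
     + (lambda * (n%:R / N%:R))%:E * expect P (fun w => ((Y w - g (Z w)) ^+ 2)%R))%E in
  (forall f g, F f -> G g -> (loss fstar gstar <= loss f g)%E) ->
  let a := m%:R / (m%:R + n%:R * lambda) in
  let b := n%:R * lambda / (m%:R + n%:R * lambda) in
  (forall c : TX -> R, is_cond_exp P X (fun w => gstar (Z w)) c ->
     is_proj P X F (fun x => n%:R / N%:R * mu x + m%:R / N%:R * c x) fstar)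
  /\ is_proj P Z G (fun z => a * fstar z.1 + b * eta z) gstar
  /\ (F mu -> G (fun z => mu z.1) -> G eta ->
      {ae P, forall w, fstar (X w) = mu (X w)}
      /\ {ae P, forall w, gstar (Z w) = a * mu (X w) + b * eta (Z w)}).
Proof.
(* F0, Fcl, Fcvx, G0 and Gcl only guarantee that minimizers and projections
   exist; here the minimizer is given. *)
move=> N Z loss fgstar_min a b.
have mZ : measurable_fun setT Z by exact: measurable_fun_pair.
have LY : L2 P Y by apply/L2P.
have {}fgstar_min : forall f g, F f -> G g ->
    (pop_loss P X W Y n m lambda fstar gstar <= pop_loss P X W Y n m lambda f g)%E.
  exact: fgstar_min.
have Lfstar := inL2_comp mX (FL2 _ Ffs); have [mfstar _] := FL2 _ Ffs.
have Lgstar := inL2_comp mZ (GL2 _ Ggs).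
split; [|split].
- move=> c hc; apply: (pop_loss_argmin_fst_is_proj mX LY hn hmu FL2 Ffs Lgstar hc).
  by move=> f Ff; exact: fgstar_min.
- apply: (pop_loss_argmin_snd_is_proj mX mW LY hn hm hl heta GL2 Ggs mfstar Lfstar).
  by move=> g Gg; exact: fgstar_min.
- exact: (pop_loss_argmin_eq mX mW LY hn hm hl hmu heta FL2 GL2 Gcvx Ffs Ggs fgstar_min).
Qed.
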